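(* In the algebra $(\mathbb Z,+,\mathbb Z)$, the monolinear proportion relation $::_m$ satisfies, for all $a,b,c,d,e,f\in\mathbb Z$: p-reflexivity $a:b::_m a:b$; p-symmetry $a:b::_m c:d\iff c:d::_m a:b$; inner p-symmetry $a:b::_m c:d\iff b:a::_m d:c$; p-determinism $a:a::_m a:d\iff d=a$; inner p-reflexivity $a:a::_m c:c$; central permutation $a:b::_m c:d\iff a:c::_m b:d$; strong inner p-reflexivity ($a:a::_m c:d\Rightarrow d=c$); strong p-reflexivity ($a:b::_m a:d\Rightarrow d=b$); p-transitivity ($a:b::_m c:d$ and $c:d::_m e:f$ imply $a:b::_m e:f$); inner p-transitivity ($a:b::_m c:d$ and $b:e::_m d:f$ imply $a:e::_m c:f$); central p-transitivity ($a:b::_m b:c$ and $b:c::_m c:d$ imply $a:b::_m c:d$). However, p-commutativity ($a:b::_m b:a$ for all $a,b$) fails.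
   Context: $(\mathbb Z,+,\mathbb Z)$ is the algebra with universe $\mathbb Z$, addition, and every integer as a constant. A justification is a pair of terms $s\to t$ with the variables of $t$ among those of $s$; monolinear justifications are those where $s,t$ contain only one fixed variable $x$, occurring at most once in $s$ and at most once in $t$. $\uparrow^m(a\to b)$ is the set of monolinear justifications $s\to t$ with $a=s(\mathbf o)$, $b=t(\mathbf o)$ for some value $\mathbf o$; $\uparrow^m(a\to b:\!\cdot\,c\to d):=\uparrow^m(a\to b)\cap\uparrow^m(c\to d)$. A monolinear justification is trivial if it lies in all sets $\uparrow^m(a'\to b':\!\cdot\,c'\to d')$. $a\to b:\!\cdot_m\,c\to d$ holds iff either (i) all justifications in $\uparrow^m(a\to b)\cup\uparrow^m(c\to d)$ are trivial, or (ii) $J_d:=\uparrow^m(a\to b:\!\cdot\,c\to d)$ contains a non-trivial justification and for every $d'$, $J_d\subseteq J_{d'}$ implies $J_{d'}$ contains a non-trivial justification and $J_{d'}\subseteq J_d$ (ignoring trivial justifications). $a:b::_m c:d$ iff $a\to b:\!\cdot_m\,c\to d$, $b\to a:\!\cdot_m\,d\to c$, $c\to d:\!\cdot_m\,a\to b$, $d\to c:\!\cdot_m\,b\to a$ all hold. *)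

From Stdlib Require Import ZArith Arith.
Open Scope Z_scope.

(* Terms of the algebra (Z, +, Z) in the single fixed variable x:
   the variable, an integer constant, or a sum of two terms. *)
Inductive term : Type :=
| TVar : term
| TConst : Z -> term
| TAdd : term -> term -> term.

Fixpoint occ (t : term) : nat :=
  match t with
  | TVar => 1%nat
  | TConst _ => 0%nat
  | TAdd s u => (occ s + occ u)%nat
  end.

Fixpoint eval (o : Z) (t : term) : Z :=
  match t with
  | TVar => o
  | TConst k => k
  | TAdd s u => eval o s + eval o u
  end.

Definition justification := (term * term)%type.

Definition monolinear (j : justification) : Prop :=
  (occ (fst j) <= 1)%nat /\ (occ (snd j) <= 1)%nat /\
  ((0 < occ (snd j))%nat -> (0 < occ (fst j))%nat).

Definition up_m (a b : Z) (j : justification) : Prop :=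
  monolinear j /\ exists o, eval o (fst j) = a /\ eval o (snd j) = b.

Definition up_m2 (a b c d : Z) (j : justification) : Prop :=
  up_m a b j /\ up_m c d j.

Definition trivial_j (j : justification) : Prop :=
  monolinear j /\ forall a' b' c' d', up_m2 a' b' c' d' j.

Definition has_nontrivial (J : justification -> Prop) : Prop :=
  exists j, J j /\ ~ trivial_j j.

Definition subset_nt (J K : justification -> Prop) : Prop :=
  forall j, J j -> ~ trivial_j j -> K j.

Definition arrow_m (a b c d : Z) : Prop :=
  (forall j, (up_m a b j \/ up_m c d j) -> trivial_j j) \/
  (has_nontrivial (up_m2 a b c d) /\
   forall d', subset_nt (up_m2 a b c d) (up_m2 a b c d') ->
     has_nontrivial (up_m2 a b c d') /\ subset_nt (up_m2 a b c d') (up_m2 a b c d)).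

Definition prop_m (a b c d : Z) : Prop :=
  arrow_m a b c d /\ arrow_m b a d c /\ arrow_m c d a b /\ arrow_m d c b a.

From Stdlib Require Import ZArith Lia Setoid.
Open Scope Z_scope.

(* Every term of (Z, +, Z) in one variable is affine, so a monolinear
   justification s -> t is either constant, of the form x + k -> l, or of the
   form x + k -> x + l.  Hence it determines its conclusion from its premise,
   which makes every justification non-trivial, and the justifications shared
   by a -> b and c -> d exist exactly when d = b or d - c = b - a.  Requiring
   this for the four arrows of a : b :: c : d leaves the arithmetic
   proportion a - b = c - d. *)

Lemma eval_affine (t : term) (o : Z) :
  eval o t = eval 0 t + Z.of_nat (occ t) * o.
Proof.
  induction t as [| k | s IHs u IHu]; cbn [eval occ].
  - change (Z.of_nat 1) with 1; ring.
  - change (Z.of_nat 0) with 0; ring.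
  - rewrite IHs, IHu, Nat2Z.inj_add; ring.
Qed.

Lemma monolinear_occ (s t : term) :
  monolinear (s, t) ->
  (occ s = 0 /\ occ t = 0 \/ occ s = 1 /\ occ t = 0 \/ occ s = 1 /\ occ t = 1)%nat.
Proof. unfold monolinear; simpl; lia. Qed.

Lemma up_m2_cases (a b c d : Z) (j : justification) :
  up_m2 a b c d j -> d = b \/ d - c = b - a.
Proof.
  destruct j as [s t].
  intros [[Hm [o [Ha Hb]]] [_ [o' [Hc Hd]]]]; simpl in *.
  rewrite eval_affine in Ha, Hb, Hc, Hd.
  destruct (monolinear_occ s t Hm) as [[Es Et] | [[Es Et] | [Es Et]]];
    rewrite Es, Et in *; simpl in *; lia.
Qed.

Lemma up_m_functional (c d d' : Z) (j : justification) :
  up_m c d j -> up_m c d' j -> d = d'.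
Proof. intros Hd Hd'; destruct (up_m2_cases c d c d' j (conj Hd Hd')); lia. Qed.

Lemma not_trivial_j (j : justification) : ~ trivial_j j.
Proof.
  intros [_ Hall]; destruct (Hall 0 0 0 1) as [H0 H1].
  pose proof (up_m_functional _ _ _ _ H0 H1); lia.
Qed.

Lemma has_nontrivial_up_m2 (a b c d : Z) :
  has_nontrivial (up_m2 a b c d) <-> d = b \/ d - c = b - a.
Proof.
  split.
  - intros [j [Hj _]]; exact (up_m2_cases a b c d j Hj).
  - intros [-> | Hdc].
    + exists (TVar, TConst b); split; [| apply not_trivial_j].
      split; (split; [unfold monolinear; simpl; lia |]).
      * exists a; simpl; auto.
      * exists c; simpl; auto.
    + exists (TVar, TAdd TVar (TConst (b - a))); split; [| apply not_trivial_j].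
      split; (split; [unfold monolinear; simpl; lia |]).
      * exists a; simpl; lia.
      * exists c; simpl; lia.
Qed.

Lemma arrow_m_iff_has_nontrivial (a b c d : Z) :
  arrow_m a b c d <-> has_nontrivial (up_m2 a b c d).
Proof.
  split.
  - intros [Hall | [Hnt _]]; [exfalso | exact Hnt].
    apply (not_trivial_j (TConst a, TConst b)), Hall; left.
    split; [unfold monolinear; simpl; lia | exists 0; simpl; auto].
  - intros Hnt; right; split; [exact Hnt |].
    intros d' Hsub.
    destruct Hnt as [j [Hj Hj_nt]].
    assert (Hd : d = d').
    { apply (up_m_functional c d d' j); [apply Hj | apply (Hsub j Hj Hj_nt)]. }
    subst d'; split; [exists j; auto | intros k Hk _; exact Hk].
Qed.

Lemma arrow_m_iff (a b c d : Z) : arrow_m a b c d <-> d = b \/ d - c = b - a.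
Proof. now rewrite arrow_m_iff_has_nontrivial, has_nontrivial_up_m2. Qed.

Lemma prop_m_iff (a b c d : Z) : prop_m a b c d <-> a - b = c - d.
Proof. unfold prop_m; rewrite !arrow_m_iff; lia. Qed.

Theorem mainTheorem5 :
  (* p-reflexivity *)
  (forall a b, prop_m a b a b) /\
  (* p-symmetry *)
  (forall a b c d, prop_m a b c d <-> prop_m c d a b) /\
  (* inner p-symmetry *)
  (forall a b c d, prop_m a b c d <-> prop_m b a d c) /\
  (* p-determinism *)
  (forall a d, prop_m a a a d <-> d = a) /\
  (* inner p-reflexivity *)
  (forall a c, prop_m a a c c) /\
  (* central permutation *)
  (forall a b c d, prop_m a b c d <-> prop_m a c b d) /\
  (* strong inner p-reflexivity *)
  (forall a c d, prop_m a a c d -> d = c) /\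
  (* strong p-reflexivity *)
  (forall a b d, prop_m a b a d -> d = b) /\
  (* p-transitivity *)
  (forall a b c d e f, prop_m a b c d -> prop_m c d e f -> prop_m a b e f) /\
  (* inner p-transitivity *)
  (forall a b c d e f, prop_m a b c d -> prop_m b e d f -> prop_m a e c f) /\
  (* central p-transitivity *)
  (forall a b c d, prop_m a b b c -> prop_m b c c d -> prop_m a b c d) /\
  (* p-commutativity fails *)
  ~ (forall a b, prop_m a b b a).
Proof.
  repeat setoid_rewrite prop_m_iff.
  repeat split; intros; try lia.
  intros Hcomm; specialize (Hcomm 0 1); lia.
Qed.
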